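(* Let $n,m$ be positive integers with $n>m$, both in canonical form, and let $k=n-m$. Then $n+(-m)\triangleq\{k-1\mid k+1\}\triangleq k+\underline{0}$, where $k-1,k+1,k$ are canonical integers and $\underline{0}\cong 1+(-1)$.
   Context: Games are short normal-play combinatorial games, written $G\cong\{L(G)\mid R(G)\}$, $\cong$ meaning identical literal forms. Canonical integers: $0\cong\{\ \mid\ \}$, $n\cong\{n-1\mid\ \}$ for $n>0$, $n\cong\{\ \mid n+1\}$ for $n<0$. Disjunctive sum $G+H\cong\{L(G)+H,G+L(H)\mid R(G)+H,G+R(H)\}$, negation $-G\cong\{-R(G)\mid -L(G)\}$. $\underline{0}$ denotes the literal game $1+(-1)\cong\{-1\mid 1\}$. Equivalence modulo domination: $G\triangleq H$ means that in $G+(-H)$, for every move by either player as first player in one summand, the other player has a response in the other summand after which the responder wins. *)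

From mathcomp Require Import all_boot.
Set Implicit Arguments. Unset Strict Implicit. Unset Printing Implicit Defensive.

(* Short games as literal forms {L | R} (finite lists of options). *)
Inductive game : Type := Game : seq game -> seq game -> game.

Definition Lopts (g : game) : seq game := let: Game l _ := g in l.
Definition Ropts (g : game) : seq game := let: Game _ r := g in r.

Fixpoint neg (g : game) : game :=
  match g with Game l r => Game (map neg r) (map neg l) end.

Fixpoint add (g : game) : game -> game :=
  fix addg (h : game) : game :=
    match g, h with
    | Game gl gr, Game hl hr =>
        Game (map (fun x => add x h) gl ++ map addg hl)
             (map (fun x => add x h) gr ++ map addg hr)
    end.

(* Normal play outcome: (Left wins moving first, Right wins moving first). *)
Fixpoint outc (g : game) : bool * bool :=
  match g with
  | Game l r => (has (fun x => ~~ (outc x).2) l, has (fun x => ~~ (outc x).1) r)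
  end.
Definition Lwins_first (g : game) : bool := (outc g).1.
Definition Rwins_first (g : game) : bool := (outc g).2.

Fixpoint cnat (n : nat) : game :=
  match n with 0 => Game [::] [::] | k.+1 => Game [:: cnat k] [::] end.

Definition zero_u : game := add (cnat 1) (neg (cnat 1)).

Fixpoint Lin (x : game) (s : seq game) : Prop :=
  match s with [::] => False | y :: t => y = x \/ Lin x t end.

(* Equivalence modulo domination G ≜ H: in G + (-H), every first move by
   either player in one summand has a response by the other player in the
   other summand after which the responder wins (the original mover being
   next to move in the resulting position). *)
Definition eqdom (g h : game) : Prop :=
  (forall x, Lin x (Lopts g) -> exists2 y, Lin y (Ropts (neg h)) & ~~ Lwins_first (add x y)) /\
  (forall y, Lin y (Lopts (neg h)) -> exists2 x, Lin x (Ropts g) & ~~ Lwins_first (add x y)) /\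
  (forall x, Lin x (Ropts g) -> exists2 y, Lin y (Lopts (neg h)) & ~~ Rwins_first (add x y)) /\
  (forall y, Lin y (Ropts (neg h)) -> exists2 x, Lin x (Lopts g) & ~~ Rwins_first (add x y)).

From mathcomp Require Import all_boot order ssralg ssrnum ssrint zify.
Set Implicit Arguments.
Unset Strict Implicit.
Unset Printing Implicit Defensive.

Import Order.TTheory GRing.Theory Num.Theory.

(* A game built from canonical integers by negation and sums is an integer in
   a hereditary sense: for some v, each Left option is such a game of value
   v - 1, each Right option one of value v + 1, and whoever is favoured by v
   has a move.  This is preserved by negation and sums, and the outcome of such
   a game is read off the sign of v.  All four games in the theorem have value
   k = n - m and options on both sides.  A move in one component of G + (-H)
   goes to value k -+ 1, a reply with any option of the other component brings
   the total value back to 0, and a game of value 0 is lost by the player to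
   move. *)

Lemma Lin_cat (x : game) s1 s2 : Lin x (s1 ++ s2) <-> Lin x s1 \/ Lin x s2.
Proof. by elim: s1 => [|y s1 IHs] /=; tauto. Qed.

Lemma Lin_map (x : game) f s : Lin x (map f s) <-> exists2 y, Lin y s & x = f y.
Proof.
elim: s x => [|y s IHs] x /=; first by split=> [|[]].
split=> [[<-|/IHs [z z_s ->]]|[z [<-|z_s] ->]].
- by exists y; first left.
- by exists z; first right.
- by left.
- by right; apply/IHs; exists z.
Qed.

Lemma Lin_map_f (x : game) f s : Lin x s -> Lin (f x) (map f s).
Proof. by move=> x_s; apply/Lin_map; exists x. Qed.

Lemma has_Lin (p : pred game) s : reflect (exists2 x, Lin x s & p x) (has p s).
Proof.
elim: s => [|y s IHs] /=; first by right; case.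
apply: (iffP orP) => [[py|/IHs [x x_s px]]|[x [<-|x_s] px]].
- by exists y; first left.
- by exists x; first right.
- by left.
- by right; apply/IHs; exists x.
Qed.

Lemma Lin_nonempty (s : seq game) : (0 < size s)%N -> exists x, Lin x s.
Proof. by case: s => // x s _; exists x; left. Qed.

Lemma add_GameE gl gr hl hr : add (Game gl gr) (Game hl hr) =
  Game (map (add^~ (Game hl hr)) gl ++ map (add (Game gl gr)) hl)
       (map (add^~ (Game hl hr)) gr ++ map (add (Game gl gr)) hr).
Proof. by []. Qed.

Lemma size_Lopts_add g h : size (Lopts (add g h)) = (size (Lopts g) + size (Lopts h))%N.
Proof. by case: g h => [gl gr] [hl hr]; rewrite /= size_cat !size_map. Qed.

Lemma size_Ropts_add g h : size (Ropts (add g h)) = (size (Ropts g) + size (Ropts h))%N.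
Proof. by case: g h => [gl gr] [hl hr]; rewrite /= size_cat !size_map. Qed.

Section IntegerGames.

Local Open Scope ring_scope.

Inductive int_game : game -> int -> Prop :=
  IntGame l r v :
    (forall x, Lin x l -> int_game x (v - 1)) ->
    (forall x, Lin x r -> int_game x (v + 1)) ->
    (0 < v -> (0 < size l)%N) ->
    (v < 0 -> (0 < size r)%N) ->
    int_game (Game l r) v.

Lemma int_game_opts g v : int_game g v ->
  (forall x, Lin x (Lopts g) -> int_game x (v - 1)) /\
  (forall x, Lin x (Ropts g) -> int_game x (v + 1)).
Proof. by case. Qed.

Lemma int_game_outc g v : int_game g v -> outc g = (0 < v, v < 0).
Proof.
elim=> {g v} l r v _ IHl _ IHr Ll Rr /=; congr (_, _).
- apply/has_Lin/idP => [[x /IHl -> /=]|v_gt0]; first lia.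
  have [x x_l] := Lin_nonempty (Ll v_gt0).
  by exists x; rewrite // IHl //=; lia.
- apply/has_Lin/idP => [[x /IHr -> /=]|v_lt0]; first lia.
  have [x x_r] := Lin_nonempty (Rr v_lt0).
  by exists x; rewrite // IHr //=; lia.
Qed.

Lemma int_game_neg g v : int_game g v -> int_game (neg g) (- v).
Proof.
elim=> {g v} l r v _ IHl _ IHr Ll Rr /=.
constructor=> [x /Lin_map [y /IHr + ->]|x /Lin_map [y /IHl + ->]||].
- by rewrite opprD.
- by rewrite opprB addrC.
- by rewrite oppr_gt0 size_map.
- by rewrite oppr_lt0 size_map.
Qed.

Lemma int_game_add g h a b :
  int_game g a -> int_game h b -> int_game (add g h) (a + b).
Proof.
move=> Hg; elim: Hg h b => {g a} gl gr a _ IHgl _ IHgr Lgl Rgr h b Hh.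
elim: Hh => {h b} hl hr b Hhl IHhl Hhr IHhr Lhl Rhr.
have Hh := IntGame Hhl Hhr Lhl Rhr.
rewrite add_GameE; constructor=> [x|x||].
- case/Lin_cat=> /Lin_map [y y_opt ->].
  + by rewrite addrAC; apply: IHgl.
  + by rewrite -addrA; apply: IHhl.
- case/Lin_cat=> /Lin_map [y y_opt ->].
  + by rewrite addrAC; apply: IHgr.
  + by rewrite -addrA; apply: IHhr.
- move=> ab_gt0; rewrite size_cat !size_map addn_gt0.
  by case: (boolP (0 < a)) => [/Lgl -> // | a_le0]; rewrite Lhl ?orbT //; lia.
- move=> ab_lt0; rewrite size_cat !size_map addn_gt0.
  by case: (boolP (a < 0)) => [/Rgr -> // | a_ge0]; rewrite Rhr ?orbT //; lia.
Qed.

Lemma outc_add_opp g h a :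
  int_game g a -> int_game h (- a) -> outc (add g h) = (false, false).
Proof. by move=> Hg Hh; rewrite (int_game_outc (int_game_add Hg Hh)) subrr ltxx. Qed.

Lemma int_game_cnat n : int_game (cnat n) n.
Proof.
elim: n => [|n IHn]; constructor=> // x [<- | []].
by rewrite intS addrC addKr.
Qed.

Lemma int_game_neighbours k :
  (0 < k)%N -> int_game (Game [:: cnat k.-1] [:: cnat k.+1]) k.
Proof.
case: k => // k _; constructor=> // x [<- | []].
- by rewrite intS addrC addKr; apply: int_game_cnat.
- by rewrite addrC -intS; apply: int_game_cnat.
Qed.

Lemma int_game_zero_u : int_game zero_u 0.
Proof. by rewrite -(subrr 1); exact: int_game_add (int_game_cnat 1) (int_game_neg (int_game_cnat 1)). Qed.

Lemma int_game_eqdom g h v : int_game g v -> int_game h v ->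
  (0 < size (Lopts g))%N -> (0 < size (Ropts g))%N ->
  (0 < size (Lopts h))%N -> (0 < size (Ropts h))%N -> eqdom g h.
Proof.
case: g h => [gl gr] [hl hr] /int_game_opts [Hgl Hgr] /int_game_opts [Hhl Hhr] /=.
move=> /Lin_nonempty [xl xl_g] /Lin_nonempty [xr xr_g].
move=> /Lin_nonempty [yl yl_h] /Lin_nonempty [yr yr_h].
rewrite /eqdom /Lwins_first /Rwins_first /=.
split; [|split; [|split]].
- move=> x x_g; exists (neg yl); first exact: Lin_map_f.
  by rewrite (outc_add_opp (Hgl _ x_g) (int_game_neg (Hhl _ yl_h))).
- move=> _ /Lin_map [y y_h ->]; exists xr => //.
  by rewrite (outc_add_opp (Hgr _ xr_g) (int_game_neg (Hhr _ y_h))).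
- move=> x x_g; exists (neg yr); first exact: Lin_map_f.
  by rewrite (outc_add_opp (Hgr _ x_g) (int_game_neg (Hhr _ yr_h))).
- move=> _ /Lin_map [y y_h ->]; exists xl => //.
  by rewrite (outc_add_opp (Hgl _ xl_g) (int_game_neg (Hhl _ y_h))).
Qed.

End IntegerGames.

Theorem lemma3p2 (n m : nat) :
  0 < m -> m < n ->
  let k := n - m in
  eqdom (add (cnat n) (neg (cnat m))) (Game [:: cnat k.-1] [:: cnat k.+1]) /\
  eqdom (Game [:: cnat k.-1] [:: cnat k.+1]) (add (cnat k) zero_u).
Proof.
case: m => [//|m] _; case: n => [//|n] lt_mn k.
have k_gt0 : (0 < k)%N by rewrite subn_gt0.
have G_k : int_game (add (cnat n.+1) (neg (cnat m.+1))) k.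
  rewrite /k -subzn; last exact: ltnW.
  exact: int_game_add (int_game_cnat _) (int_game_neg (int_game_cnat _)).
have H_k := int_game_neighbours k_gt0.
have K_k : int_game (add (cnat k) zero_u) k.
  by rewrite -[Posz k]addr0; exact: int_game_add (int_game_cnat _) int_game_zero_u.
split; first exact: (int_game_eqdom G_k H_k).
by apply: (int_game_eqdom H_k K_k); rewrite // ?size_Lopts_add ?size_Ropts_add addnC.
Qed.
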